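(* Let $\mathcal{V}$ be a non-trivial quantale and $\mathsf{F}\colon\mathbf{Set}\to\mathbf{Set}$ a functor. Let $\mathbf{Pred}(\mathsf{F})$ be the partially ordered conglomerate of classes of $\mathcal{V}$-valued predicate liftings for $\mathsf{F}$, ordered by $\Lambda\le\Lambda'$ iff $\Lambda\supseteq\Lambda'$, and let $\mathbf{Lift}(\mathsf{F})$ be the partially ordered class of liftings of $\mathsf{F}$ to $\mathbf{Cat}(\mathcal{V})$, ordered by $\overline{\mathsf{F}}\le\overline{\mathsf{F}}'$ iff for every $\mathcal{V}$-category $(X,a)$ the structure of $\overline{\mathsf{F}}(X,a)$ is pointwise below that of $\overline{\mathsf{F}}'(X,a)$. Then the monotone map $\mathsf{F}^{(-)}\colon\mathbf{Pred}(\mathsf{F})\to\mathbf{Lift}(\mathsf{F})$ sending $\Lambda$ to the Kantorovich lifting $\mathsf{F}^\Lambda$ is right adjoint to the map $\mathsf{P}\colon\mathbf{Lift}(\mathsf{F})\to\mathbf{Pred}(\mathsf{F})$ sending a lifting $\overline{\mathsf{F}}$ to the class $\mathsf{P}(\overline{\mathsf{F}})$ of all $\mathcal{V}$-valued predicate liftings for $\mathsf{F}$ compatible with $\overline{\mathsf{F}}$; i.e. for every lifting $\overline{\mathsf{F}}$ and every class $\Lambda$, $\Lambda\subseteq\mathsf{P}(\overline{\mathsf{F}})$ iff $\overline{\mathsf{F}}\le\mathsf{F}^\Lambda$.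
   Context: A quantale $(\mathcal{V},\otimes,k)$ is a complete lattice with a commutative monoid structure such that each $u\otimes-$ preserves joins; $\hom(u,-)$ is its right adjoint; non-trivial means $\bot\ne\top$. A $\mathcal{V}$-category is $(X,a)$ with $a\colon X\times X\to\mathcal{V}$, $k\le a(x,x)$, $a(x,y)\otimes a(y,z)\le a(x,z)$; $\mathcal{V}$-functors satisfy $a(x,y)\le b(f(x),f(y))$; category $\mathbf{Cat}(\mathcal{V})$, forgetful functor $|-|$. $\mathcal{V}=(\mathcal{V},\hom)$; for a cardinal $\kappa$, $\mathcal{V}^\kappa$ is the set of functions $\kappa\to\mathcal{V}$ with structure $[f,g]=\bigwedge_{i\in\kappa}\hom(f(i),g(i))$. A lifting of $\mathsf{F}$ is a functor $\overline{\mathsf{F}}$ on $\mathbf{Cat}(\mathcal{V})$ with $|\overline{\mathsf{F}}-|=\mathsf{F}|-|$. A $\kappa$-ary $\mathcal{V}$-valued predicate lifting for $\mathsf{F}$ is a natural transformation $\lambda\colon\mathbf{Set}(-,\mathcal{V}^\kappa)\to\mathbf{Set}(\mathsf{F}-,\mathcal{V})$. The Kantorovich lifting $\mathsf{F}^\Lambda$ of a class $\Lambda$ of such liftings sends $(X,a)$ to $\mathsf{F}X$ equipped with the initial structure $c(\mathfrak{x},\mathfrak{y})=\bigwedge\hom(\lambda_X(f)(\mathfrak{x}),\lambda_X(f)(\mathfrak{y}))$, the meet over all $\kappa$-ary $\lambda\in\Lambda$ and all $\mathcal{V}$-functors $f\colon(X,a)\to\mathcal{V}^\kappa$, and acts as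 $\mathsf{F}$ on maps. A $\kappa$-ary predicate lifting $\lambda$ is compatible with a lifting $\overline{\mathsf{F}}$ if for every $\mathcal{V}$-category $X$ and every $\mathcal{V}$-functor $f\colon X\to\mathcal{V}^\kappa$, the map $\lambda_{|X|}(f)$ is a $\mathcal{V}$-functor $\overline{\mathsf{F}}X\to\mathcal{V}$. *)

Record Quantale := {
  qcar :> Type;
  qle : qcar -> qcar -> Prop;
  qle_refl : forall u, qle u u;
  qle_trans : forall u v w, qle u v -> qle v w -> qle u w;
  qle_antisym : forall u v, qle u v -> qle v u -> u = v;
  qsup : (qcar -> Prop) -> qcar;
  qsup_ub : forall (S : qcar -> Prop) u, S u -> qle u (qsup S);
  qsup_least : forall (S : qcar -> Prop) w,
      (forall u, S u -> qle u w) -> qle (qsup S) w;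
  qtensor : qcar -> qcar -> qcar;
  qk : qcar;
  qtensor_assoc : forall u v w, qtensor u (qtensor v w) = qtensor (qtensor u v) w;
  qtensor_comm : forall u v, qtensor u v = qtensor v u;
  qtensor_k : forall u, qtensor u qk = u;
  qtensor_sup : forall u (S : qcar -> Prop),
      qtensor u (qsup S) = qsup (fun v => exists w, S w /\ v = qtensor u w)
}.

Arguments qle {V} : rename.
Arguments qsup {V} : rename.
Arguments qtensor {V} : rename.
Arguments qk {V} : rename.

Definition qinf {V : Quantale} (S : V -> Prop) : V :=
  qsup (fun w => forall v, S v -> qle w v).
Definition qbot (V : Quantale) : V := qsup (fun _ => False).
Definition qtop (V : Quantale) : V := qsup (fun _ => True).
(* the right adjoint hom(u,-) of u (x) - *)
Definition qhom {V : Quantale} (u v : V) : V :=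
  qsup (fun w => qle (qtensor u w) v).

Definition nontrivial (V : Quantale) : Prop := qbot V <> qtop V.

Definition is_VCat {V : Quantale} {X : Type} (a : X -> X -> V) : Prop :=
  (forall x, qle qk (a x x)) /\
  (forall x y z, qle (qtensor (a x y) (a y z)) (a x z)).

Definition is_VFun {V : Quantale} {X Y : Type} (a : X -> X -> V) (b : Y -> Y -> V)
  (f : X -> Y) : Prop :=
  forall x y, qle (a x y) (b (f x) (f y)).

Record VCat (V : Quantale) := {
  vcar : Type;
  vstr : vcar -> vcar -> V;
  vstr_cat : is_VCat vstr
}.
Arguments vcar {V}.
Arguments vstr {V}.

Definition homV (V : Quantale) : V -> V -> V := fun u v => qhom u v.
Definition powV (V : Quantale) (kappa : Type) : (kappa -> V) -> (kappa -> V) -> V :=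
  fun f g => qinf (fun v => exists i : kappa, v = qhom (f i) (g i)).

Record SetFunctor := {
  Fobj :> Type -> Type;
  Fmap : forall {A B : Type}, (A -> B) -> Fobj A -> Fobj B;
  Fmap_id : forall (A : Type) (t : Fobj A), Fmap (fun x => x) t = t;
  Fmap_comp : forall (A B C : Type) (f : A -> B) (g : B -> C) (t : Fobj A),
      Fmap (fun x => g (f x)) t = Fmap g (Fmap f t)
}.
Arguments Fmap {F} {A B} : rename.

(** * kappa-ary V-valued predicate liftings:
    natural transformations Set(-, V^kappa) -> Set(F-, V) *)
Record PredLifting (V : Quantale) (F : SetFunctor) (kappa : Type) := {
  plift : forall X : Type, (X -> kappa -> V) -> F X -> V;
  plift_nat : forall (X Y : Type) (h : X -> Y) (f : Y -> kappa -> V) (t : F X),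
      plift X (fun x => f (h x)) t = plift Y f (Fmap h t)
}.
Arguments plift {V F kappa}.

Definition PredClass (V : Quantale) (F : SetFunctor) :=
  forall kappa : Type, PredLifting V F kappa -> Prop.

(** * Liftings of F to Cat(V): functors Fbar with |Fbar -| = F |-|,
    i.e. a V-category structure on F X for each V-category X such that
    F f is a V-functor whenever f is. *)
Record Lifting (V : Quantale) (F : SetFunctor) := {
  lstr : forall X : VCat V, F (vcar X) -> F (vcar X) -> V;
  lstr_cat : forall X : VCat V, is_VCat (lstr X);
  lstr_fun : forall (X Y : VCat V) (f : vcar X -> vcar Y),
      is_VFun (vstr X) (vstr Y) f -> is_VFun (lstr X) (lstr Y) (Fmap f)
}.
Arguments lstr {V F}.

Definition lift_le {V : Quantale} {F : SetFunctor}
  (L : Lifting V F) (S : forall X : VCat V, F (vcar X) -> F (vcar X) -> V) : Prop :=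
  forall (X : VCat V) (s t : F (vcar X)), qle (lstr L X s t) (S X s t).

Definition compatible {V : Quantale} {F : SetFunctor} {kappa : Type}
  (lam : PredLifting V F kappa) (L : Lifting V F) : Prop :=
  forall (X : VCat V) (f : vcar X -> kappa -> V),
    is_VFun (vstr X) (powV V kappa) f ->
    is_VFun (lstr L X) (homV V) (plift lam (vcar X) f).

Definition Pcompat {V : Quantale} {F : SetFunctor} (L : Lifting V F) : PredClass V F :=
  fun kappa lam => compatible lam L.

Definition kantorovich {V : Quantale} {F : SetFunctor} (Lam : PredClass V F)
  (X : VCat V) (s t : F (vcar X)) : V :=
  qinf (fun v => exists (kappa : Type) (lam : PredLifting V F kappa)
                        (f : vcar X -> kappa -> V),
          Lam kappa lam /\ is_VFun (vstr X) (powV V kappa) f /\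
          v = qhom (plift lam (vcar X) f s) (plift lam (vcar X) f t)).

Definition class_sub {V : Quantale} {F : SetFunctor} (L1 L2 : PredClass V F) : Prop :=
  forall kappa lam, L1 kappa lam -> L2 kappa lam.

(* The Kantorovich structure on F X is the initial structure making every
   lambda_X(f) with lambda in Lambda a V-functor into V.  Hence a lifting lies
   below F^Lambda exactly when all these maps are already V-functors on its own
   structures, i.e. when Lambda consists of predicate liftings compatible with it. *)


Lemma qinf_lb {V : Quantale} (S : V -> Prop) v : S v -> qle (qinf S) v.
Proof. intros Sv. apply qsup_least. intros u Hu. exact (Hu v Sv). Qed.

Lemma qinf_glb {V : Quantale} (S : V -> Prop) w :
  (forall v, S v -> qle w v) -> qle w (qinf S).
Proof. intros Hw. exact (qsup_ub V (fun u => forall v, S v -> qle u v) w Hw). Qed.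

Lemma le_kantorovich {V : Quantale} {F : SetFunctor} (Lam : PredClass V F)
  (X : VCat V) (c : F (vcar X) -> F (vcar X) -> V) :
  (forall s t, qle (c s t) (kantorovich Lam X s t)) <->
  (forall kappa (lam : PredLifting V F kappa) (f : vcar X -> kappa -> V),
      Lam kappa lam -> is_VFun (vstr X) (powV V kappa) f ->
      is_VFun c (homV V) (plift lam (vcar X) f)).
Proof.
  split.
  - intros Hle kappa lam f Hlam Hf s t.
    apply (qle_trans _ _ _ _ (Hle s t)), qinf_lb.
    exists kappa, lam, f. auto.
  - intros Hfun s t. apply qinf_glb.
    intros v (kappa & lam & f & Hlam & Hf & ->).
    exact (Hfun kappa lam f Hlam Hf s t).
Qed.

Theorem theorem3 (V : Quantale) (F : SetFunctor) (HV : nontrivial V)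
  (L : Lifting V F) (Lam : PredClass V F) :
  class_sub Lam (Pcompat L) <-> lift_le L (kantorovich Lam).
Proof.
  split.
  - intros Hsub X. apply le_kantorovich.
    intros kappa lam f Hlam. exact (Hsub kappa lam Hlam X f).
  - intros Hle kappa lam Hlam X f.
    exact (proj1 (le_kantorovich Lam X (lstr L X)) (Hle X) kappa lam f Hlam).
Qed.
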